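(* Let $\psi\in\mathbb{R}[x]$ be a polynomial of degree $\ge 3$ with homogeneous expansion $\psi=\psi_t+\dots+\psi_m$, where $\psi_t\neq 0$ and $\psi_m\neq 0$. If the constant function $1$ is in the image of the Fischer operator $F_\psi$, then $\psi_m$ is a harmonic divisor.
   Context: $\mathbb{R}[x]$ denotes the real polynomials in $d$ variables, $\Delta$ the Laplacian, and $F_\psi:\mathbb{R}[x]\to\mathbb{R}[x]$, $F_\psi(q)=\Delta(\psi q)$, the Fischer operator. A polynomial $f_j$ is homogeneous of degree $j$ if $f_j(rx)=r^jf_j(x)$ for all $r>0$, $x\in\mathbb{R}^d$; every polynomial of degree $m$ is written uniquely as $f=f_t+\dots+f_m$ with $f_j$ homogeneous of degree $j$, $f_t\ne0$, $f_m\ne 0$. A polynomial $f$ is a harmonic divisor if there exists a non-zero polynomial $q$ such that $fq$ is harmonic. *)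

From HB Require Import structures.
From mathcomp Require Import all_boot all_order all_algebra.
From mathcomp Require Import reals.
From mathcomp Require Import mpoly.

Set Implicit Arguments.
Unset Strict Implicit.
Unset Printing Implicit Defensive.

Import Order.TTheory GRing.Theory Num.Theory.
Local Open Scope ring_scope.

Definition laplacian {R : ringType} {n : nat} (p : {mpoly R[n]}) : {mpoly R[n]} :=
  \sum_(i < n) mderiv i (mderiv i p).

Definition fischer {R : comRingType} {n : nat} (psi q : {mpoly R[n]}) : {mpoly R[n]} :=
  laplacian (psi * q).

Definition homog_part {R : ringType} {n : nat} (k : nat) (p : {mpoly R[n]}) : {mpoly R[n]} :=
  \sum_(m <- msupp p | mdeg m == k) p@_m *: 'X_[m].

(* Total degree of a polynomial (msize p = 1 + degree for p != 0). *)
Definition tdeg {R : ringType} {n : nat} (p : {mpoly R[n]}) : nat := (msize p).-1.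

Definition harmonic_divisor {R : comRingType} {n : nat} (f : {mpoly R[n]}) : Prop :=
  exists q : {mpoly R[n]}, q != 0 /\ laplacian (f * q) = 0.

From mathcomp Require Import all_boot all_order all_algebra.
From mathcomp Require Import reals.
From mathcomp Require Import mpoly.
From mathcomp Require Import zify ring.
Import GRing.Theory Num.Theory.
Local Open Scope ring_scope.

(* If [Delta (psi q) = 1] then [q != 0], and the top homogeneous component of
   [psi q] is [psi_m q_k], of degree [m + k >= 3].  The Laplacian maps the
   component of degree [m + k] of [psi q] to the component of degree
   [m + k - 2 >= 1] of [Delta (psi q) = 1], which vanishes; hence
   [Delta (psi_m q_k) = 0] with [q_k != 0]. *)

Section HomogPart.
Context {R : nzRingType} {n : nat}.
Implicit Types (p q : {mpoly R[n]}).

Lemma homog_partE k p : homog_part k p = pihomog mdeg k p.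
Proof. by []. Qed.

Lemma mcoeff_homog_part k p m :
  (homog_part k p)@_m = if mdeg m == k then p@_m else 0.
Proof.
pose s := maxn (msize p) (mdeg m).+1.
pose c m' := if mdeg m' == k then p@_m' else 0.
rewrite homog_partE (pihomogwE _ _ (leq_maxl _ _ : msize p <= s)%N) big_mkcond.
rewrite (eq_bigr (fun m' : 'X_{1..n < s} => c m' *: 'X_[m'])).
  exact: (mcoeff_mpoly c (leq_maxr _ _)).
by move=> m' _; rewrite /c; case: ifP; rewrite ?scale0r.
Qed.

Lemma msize_le p k : (forall m, p@_m != 0 -> (mdeg m < k)%N) -> (msize p <= k)%N.
Proof.
move=> ltk; rewrite msizeE; apply/bigmax_leqP_seq => m + _.
by rewrite mcoeff_msupp => /ltk.
Qed.

Lemma homog_part_small k p : (msize p <= k)%N -> homog_part k p = 0.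
Proof.
move=> le_pk; apply/mpolyP => m; rewrite mcoeff_homog_part mcoeff0.
by case: eqP => // mk; apply/memN_msupp_eq0/msize_mdeg_ge; rewrite mk.
Qed.

Lemma msize_homog_part k p : (msize (homog_part k p) <= k.+1)%N.
Proof.
apply: msize_le => m; rewrite mcoeff_homog_part.
by case: (mdeg m =P k) => [-> //|_]; rewrite eqxx.
Qed.

Lemma msize_sub_homog_part_tdeg p :
  (msize (p - homog_part (tdeg p) p) <= tdeg p)%N.
Proof.
apply: msize_le => m; rewrite mcoeffB mcoeff_homog_part.
case: (mdeg m =P tdeg p) => [_|ne]; first by rewrite subrr eqxx.
rewrite subr0 -mcoeff_msupp => /msize_mdeg_lt.
by move: ne; rewrite /tdeg; lia.
Qed.

Lemma homog_part_tdeg_eq0 p : (homog_part (tdeg p) p == 0) = (p == 0).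
Proof.
apply/idP/idP => [|/eqP->]; last by rewrite /homog_part msupp0 big_nil.
apply: contraLR => nz_p; apply/eqP => /mpolyP /(_ (mlead p)).
rewrite mcoeff_homog_part mcoeff0 /tdeg -mlead_deg //= eqxx.
by apply/eqP; rewrite mleadc_eq0.
Qed.

End HomogPart.

Section Laplacian.
Context {R : nzRingType} {n : nat}.
Implicit Types (p : {mpoly R[n]}).

Lemma laplacian0 : laplacian (0 : {mpoly R[n]}) = 0.
Proof. by rewrite /laplacian big1 // => i _; rewrite !mderiv0. Qed.

Lemma mcoeff_laplacian p m : (laplacian p)@_m =
  \sum_(i < n) p@_(m + U_(i) + U_(i)) *+ ((m + U_(i))%MM i).+1 *+ (m i).+1.
Proof.
by rewrite /laplacian raddf_sum /=; apply: eq_bigr => i _; rewrite !mcoeff_mderiv.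
Qed.

Lemma homog_part_laplacian k p :
  homog_part k (laplacian p) = laplacian (homog_part k.+2 p).
Proof.
apply/mpolyP => m; rewrite mcoeff_homog_part !mcoeff_laplacian.
have mdegUU i : mdeg (m + U_(i) + U_(i))%MM = (mdeg m).+2.
  by rewrite !mdegD mdeg1 !addn1.
case: eqP => [<-|ne].
  by apply: eq_bigr => i _; rewrite mcoeff_homog_part mdegUU eqxx.
rewrite big1 // => i _; rewrite mcoeff_homog_part mdegUU !eqSS.
by move/eqP/negbTE: ne => ->; rewrite !mul0rn.
Qed.

End Laplacian.

Section Product.
Context {R : idomainType} {n : nat}.
Implicit Types (p q : {mpoly R[n]}).

Lemma msizeM_le_pred {p q a b} :
  (msize p <= a)%N -> (msize q <= b)%N -> (msize (p * q) <= (a + b).-1)%N.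
Proof.
have [->|nz_p] := eqVneq p 0; first by rewrite mul0r msize0.
have [->|nz_q] := eqVneq q 0; first by rewrite mulr0 msize0.
by move=> le_pa le_qb; rewrite msizeM // -!subn1 leq_sub2r // leq_add.
Qed.

Lemma homog_partM_tdeg p q : q != 0 ->
  homog_part (tdeg p + tdeg q) (p * q) =
  homog_part (tdeg p) p * homog_part (tdeg q) q.
Proof.
move=> nz_q; have szq : msize q = (tdeg q).+1.
  by rewrite prednK // lt0n msize_poly_eq0.
have := msize_homog_part (tdeg p) p; have := msize_sub_homog_part_tdeg p.
have := msize_sub_homog_part_tdeg q.
have := pihomogP mdeg (tdeg p) p; have := pihomogP mdeg (tdeg q) q.
rewrite -!homog_partE; move: (homog_part _ p) (homog_part _ q).
move=> P Q homQ homP szQ' szP' szP.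
have ->: p * q = P * Q + (P * (q - Q) + (p - P) * q) by ring.
rewrite homog_partE raddfD /= pihomog_dE; last exact: dhomogM.
rewrite -homog_partE homog_part_small ?addr0 //.
apply: leq_trans (msizeD_le _ _) _; rewrite geq_max.
rewrite (leq_trans (msizeM_le_pred szP szQ')) //.
by rewrite (leq_trans (msizeM_le_pred szP' (eq_leq szq))) ?addnS.
Qed.

End Product.

Theorem mainTheorem2 (R : realType) (d : nat) (psi : {mpoly R[d]}) :
  (3 <= tdeg psi)%N ->
  (exists q : {mpoly R[d]}, fischer psi q = 1) ->
  harmonic_divisor (homog_part (tdeg psi) psi).
Proof.
move=> deg_psi [q fischer_q].
have nz_q : q != 0.
  apply: contra_eq_neq fischer_q => ->.
  by rewrite /fischer mulr0 laplacian0 eq_sym oner_neq0.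
exists (homog_part (tdeg q) q); split; first by rewrite homog_part_tdeg_eq0.
rewrite -homog_partM_tdeg //.
have ->: (tdeg psi + tdeg q = (tdeg psi + tdeg q).-2.+2)%N by lia.
rewrite -homog_part_laplacian -/(fischer psi q) fischer_q.
by rewrite homog_part_small // msize1; lia.
Qed.
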